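(* Let $f:\mathbb{R}^n\to\mathbb{R}$ be continuously differentiable and bounded below, let $s$ be an integer with $0<s<n$, and let $\{\mathbf{x}^k\}$ be the sequence generated by the partial sparse-simplex method. Then any accumulation point of $\{\mathbf{x}^k\}$ is a BF vector of the problem (P): minimize $f(\mathbf{x})$ subject to $\|\mathbf{x}\|_0\le s$.
   Context: $\|\mathbf{x}\|_0$ is the number of nonzero components, $C_s=\{\mathbf{x}:\|\mathbf{x}\|_0\le s\}$, $I_1(\mathbf{x})=\{i:x_i\neq0\}$, $I_0(\mathbf{x})=\{i:x_i=0\}$, $\mathbf{e}_i$ the $i$-th standard basis vector. Partial sparse-simplex method (all one-dimensional minima assumed attained): choose $\mathbf{x}^0\in C_s$. At step $k$: if $\|\mathbf{x}^k\|_0<s$, for each $i=1,\dots,n$ let $t_i\in\operatorname{argmin}_t f(\mathbf{x}^k+t\mathbf{e}_i)$, $f_i=\min_t f(\mathbf{x}^k+t\mathbf{e}_i)$, $i_k\in\operatorname{argmin}_i f_i$; if $f_{i_k}<f(\mathbf{x}^k)$ set $\mathbf{x}^{k+1}=\mathbf{x}^k+t_{i_k}\mathbf{e}_{i_k}$, else stop. If $\|\mathbf{x}^k\|_0=s$: for $i\in I_1(\mathbf{x}^k)$ let $f_i=\min_t f(\mathbf{x}^k+t\mathbf{e}_i)$; let $i_k^1\in\operatorname{argmin}\{f_i:i\in I_1(\mathbf{x}^k)\}$, $i_k^2\in\operatorname{argmax}\{|\nabla_i f(\mathbf{x}^k)|:i\in I_0(\mathbf{x}^k)\}$, $m_k\in\operatorname{argmin}\{|x_i^k|:i\in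 I_1(\mathbf{x}^k)\}$; let $D_k^1=\min_t f(\mathbf{x}^k+t\mathbf{e}_{i_k^1})$ with minimizer $T_k^1$, and $D_k^2=\min_t f(\mathbf{x}^k-x^k_{m_k}\mathbf{e}_{m_k}+t\mathbf{e}_{i_k^2})$ with minimizer $T_k^2$; if $D_k^1<D_k^2$ set $\mathbf{x}^{k+1}=\mathbf{x}^k+T_k^1\mathbf{e}_{i_k^1}$, else $\mathbf{x}^{k+1}=\mathbf{x}^k-x^k_{m_k}\mathbf{e}_{m_k}+T_k^2\mathbf{e}_{i_k^2}$. A vector $\mathbf{x}^*\in C_s$ is a basic feasible (BF) vector of (P) if: when $\|\mathbf{x}^*\|_0<s$, $\nabla f(\mathbf{x}^* )=0$; and when $\|\mathbf{x}^*\|_0=s$, $\nabla_i f(\mathbf{x}^* )=0$ for all $i\in I_1(\mathbf{x}^* )$. *)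

From mathcomp Require Import all_boot all_order all_algebra.
From mathcomp Require Import all_classical all_reals all_analysis.
Set Implicit Arguments. Unset Strict Implicit. Unset Printing Implicit Defensive.
Import Order.TTheory GRing.Theory Num.Theory.
Import numFieldNormedType.Exports.
Local Open Scope ring_scope.

Section Defs.
Variables (R : realType) (n : nat).
Notation V := 'rV[R]_n.

Definition ei (i : 'I_n) : V := delta_mx 0 i.

Definition gradi (f : V -> R) (x : V) (i : 'I_n) : R := 'd f x (ei i).

Definition l0 (x : V) : nat := #|[set i : 'I_n | x 0 i != 0]|.
Definition I1 (x : V) : {set 'I_n} := [set i | x 0 i != 0].
Definition I0 (x : V) : {set 'I_n} := [set i | x 0 i == 0].

Definition C1 (f : V -> R) : Prop :=
  (forall x, differentiable f x) /\ (forall i, continuous (fun x => gradi f x i)).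

Definition bounded_below (f : V -> R) : Prop := exists m : R, forall x, m <= f x.

Definition argmin1 (f : V -> R) (y : V) (i : 'I_n) (t : R) : Prop :=
  forall t', f (y + t *: ei i) <= f (y + t' *: ei i).

(* One step of the partial sparse-simplex method, from x to y.
   If the method stops at x, we let the sequence stay constant (y = x). *)
Definition pss_step (f : V -> R) (s : nat) (x y : V) : Prop :=
  if (l0 x < s)%N then
    (exists (i : 'I_n) (t : R),
       argmin1 f x i t /\
       (forall (j : 'I_n) (t' : R), f (x + t *: ei i) <= f (x + t' *: ei j)) /\
       f (x + t *: ei i) < f x /\ y = x + t *: ei i)
    \/
    (* stopping rule: f_{i_k} >= f(x) *)
    ((forall (j : 'I_n) (t' : R), f x <= f (x + t' *: ei j)) /\ y = x)
  else
    exists (i1 i2 m : 'I_n) (T1 T2 : R),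
      [/\ i1 \in I1 x,
          argmin1 f x i1 T1,
          (forall j t', j \in I1 x -> f (x + T1 *: ei i1) <= f (x + t' *: ei j)),
          i2 \in I0 x &
          (forall j, j \in I0 x -> `|gradi f x j| <= `|gradi f x i2|)] /\
      [/\ m \in I1 x,
          (forall j, j \in I1 x -> `|x 0 m| <= `|x 0 j|),
          argmin1 f (x - x 0 m *: ei m) i2 T2 &
          (if f (x + T1 *: ei i1) < f (x - x 0 m *: ei m + T2 *: ei i2)
           then y = x + T1 *: ei i1
           else y = x - x 0 m *: ei m + T2 *: ei i2)].

Definition pss_seq (f : V -> R) (s : nat) (xs : nat -> V) : Prop :=
  (l0 (xs 0%N) <= s)%N /\ forall k, pss_step f s (xs k) (xs k.+1).

Definition accumulation_point (xs : nat -> V) (p : V) : Prop :=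
  forall e : R, 0 < e -> forall N : nat, exists k : nat, (N <= k)%N /\ `|xs k - p| < e.

Definition BF (f : V -> R) (s : nat) (x : V) : Prop :=
  (l0 x <= s)%N /\
  ((l0 x < s)%N -> forall i, gradi f x i = 0) /\
  (l0 x = s -> forall i, i \in I1 x -> gradi f x i = 0).

End Defs.

(* The values [f (xs k)] are nonincreasing, so [f p] bounds [f] from below on
   every coordinate line the method could explore from an iterate [xs k].
   Along iterates close to [p] this shows that [t |-> f (p + t e_i)] is
   minimal at [0], hence [grad_i f p = 0], for each [i] in the support of [p]
   and, when [||p||_0 < s], for every [i]: either such moves are available
   infinitely often near [p], or some entering coordinate [i2] of a swap step
   recurs infinitely often; the swapped points also tend to [p] because [p] has
   fewer nonzeros, so [grad_i2 f p = 0], and [|grad_i f| <= |grad_i2 f|] passes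
   to the limit by continuity of the gradient. *)

From mathcomp Require Import all_boot all_order all_algebra.
From mathcomp Require Import all_classical all_reals all_analysis.
From mathcomp Require Import lra zify.
Set Implicit Arguments. Unset Strict Implicit. Unset Printing Implicit Defensive.
Import Order.TTheory GRing.Theory Num.Theory.
Import numFieldNormedType.Exports.
Local Open Scope classical_set_scope.
Local Open Scope ring_scope.

Lemma ler_norm_entry (R : realType) (m n : nat) (A : 'M[R]_(m, n)) i j :
  `|A i j| <= `|A|.
Proof.
have -> : `|A| = mx_norm A by [].
by rewrite mx_normrE (bigD1 (i, j)) //= le_max lexx.
Qed.

Lemma le_of_cvg_ge (R : realType) (V : normedModType R) (g : V -> R) q c :
  {for q, continuous g} ->
  (forall e, 0 < e -> exists z, `|z - q| < e /\ c <= g z) -> c <= g q.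
Proof.
move=> gq near_ge; rewrite leNgt; apply/negP => gqc.
have /cvgrPdist_lt/(_ (c - g q)) : g @ q --> g q by [].
rewrite subr_gt0 => /(_ gqc) /nbhs_ballP [d d0 gd].
have [z [zq cz]] := near_ge d d0.
have /gd /= /ltr_normlP [] : ball q d z by rewrite -ball_normE /= distrC.
lra.
Qed.

Lemma derive_eq0_at_line_min (R : realType) (V : normedModType R) (f : V -> R) p v :
  (forall x, differentiable f x) -> (forall t : R, f p <= f (p + t *: v)) ->
  'd f p v = 0.
Proof.
move=> df pmin.
pose g (h : R) := f (h *: v + p).
have g_derivable t : derivable g t 1.
  by apply: diff_derivable; apply: differentiable_comp.
have g'0 : 'D_1 g 0 = 0.
  apply: derive_val; apply: (@derive1_at_min R g (-1) 1 0) => //.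
    by rewrite in_itv /= ltrN10 ltr01.
  by move=> t _; rewrite /g scale0r add0r addrC.
rewrite -deriveE // -g'0 /derive /g.
suff -> : (fun h : R => h^-1 *: (f ((h%:A + 0) *: v + p) - f (0 *: v + p))) =
          (fun h : R => h^-1 *: (f (h *: v + p) - f p)) by [].
by apply: funext => h; rewrite addr0 scale0r add0r [_%:A]mulr1.
Qed.

Section Frequently.
Variables (R : realType) (V : normedModType R) (xs : nat -> V) (p : V).

Definition frequently_near (P : nat -> Prop) :=
  forall e : R, 0 < e -> forall N, exists k, (N <= k)%N /\ P k /\ `|xs k - p| < e.

Lemma frequently_near_mono (P Q : nat -> Prop) :
  (forall k, P k -> Q k) -> frequently_near P -> frequently_near Q.
Proof.
move=> PQ oftenP e e0 N; have [k [kN [Pk xsk]]] := oftenP e e0 N.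
by exists k; split => //; split => //; apply: PQ.
Qed.

Lemma frequently_near_or (P Q : nat -> Prop) :
  frequently_near (fun k => P k \/ Q k) -> frequently_near P \/ frequently_near Q.
Proof.
move=> oftenPQ; case: (pselect (frequently_near P)) => [|notP]; [by left|right].
move=> e e0 N; apply: contrapT => notQ; apply: notP => e' e'0 N'.
have m0 : 0 < Num.min e e' by rewrite lt_min e0 e'0.
have [k [kN [[Pk|Qk] xsk]]] := oftenPQ _ m0 (maxn N N').
- exists k; split; first by apply: leq_trans kN; apply: leq_maxr.
  by split => //; apply: lt_le_trans xsk _; rewrite ge_min lexx orbT.
- exfalso; apply: notQ; exists k; split; first by apply: leq_trans kN; apply: leq_maxl.
  by split => //; apply: lt_le_trans xsk _; rewrite ge_min lexx.
Qed.

Lemma frequently_near_exists (I : finType) (Q : I -> nat -> Prop) :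
  frequently_near (fun k => exists j, Q j k) -> exists j, frequently_near (Q j).
Proof.
suff in_seq (r : seq I) : frequently_near (fun k => exists2 j, j \in r & Q j k) ->
    exists j, frequently_near (Q j).
  move=> oftenQ; apply: (in_seq (enum I)); apply: frequently_near_mono oftenQ.
  by move=> k [j Qj]; exists j; rewrite ?mem_enum.
elim: r => [|a r IHr] oftenQ.
  by have [k [_ [[j]]]] := oftenQ 1 ltr01 0; rewrite in_nil.
have split_head k : (exists2 j, j \in a :: r & Q j k) ->
    Q a k \/ exists2 j, j \in r & Q j k.
  by case=> j; rewrite inE => /predU1P [->|jr Qj]; [left | right; exists j].
by have [|] := frequently_near_or (frequently_near_mono split_head oftenQ);
  [exists a | exact: IHr].
Qed.

End Frequently.

Section Support.
Variables (R : realType) (n : nat).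
Implicit Types (x z p : 'rV[R]_n) (t : R) (i j m : 'I_n).

Lemma ei_scale_addE x t i j : (x + t *: ei R i) 0 j = x 0 j + t * (j == i)%:R.
Proof. by rewrite !mxE eqxx. Qed.

Lemma norm_ei_le1 i : `|ei R i| <= 1.
Proof.
have -> : `|ei R i| = mx_norm (ei R i) by [].
rewrite mx_normrE; elim/big_ind: _ => //; first by move=> a b a1 b1; rewrite ge_max a1 b1.
by move=> [a b] _ /=; rewrite /ei mxE ord1 eqxx; case: (b == i); rewrite ?normr1 ?normr0.
Qed.

Lemma l0_add_ei x t i : (l0 (x + t *: ei R i) <= (l0 x).+1)%N.
Proof.
rewrite /l0; apply: (leq_trans (subset_leq_card (_ : _ \subset i |: [set j | x 0 j != 0]))).
  apply/fintype.subsetP => j; rewrite !inE ei_scale_addE.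
  by case: (j == i); rewrite ?orbT // mulr0 addr0.
by rewrite cardsU1; case: (i \notin _).
Qed.

Lemma l0_add_ei_support x t i : i \in I1 x -> (l0 (x + t *: ei R i) <= l0 x)%N.
Proof.
rewrite inE => xi; apply: subset_leq_card; apply/fintype.subsetP => j.
rewrite !inE ei_scale_addE; case: (j =P i) => [-> //|_].
by rewrite mulr0 addr0.
Qed.

Lemma l0_swap x t m i :
  m \in I1 x -> leq (l0 (x - x 0 m *: ei R m + t *: ei R i)) (l0 x).
Proof.
move=> xm; rewrite /l0.
apply: (leq_trans (subset_leq_card (_ : _ \subset i |: ([set j | x 0 j != 0] :\ m)))).
  apply/fintype.subsetP => j; rewrite !inE !mxE !eqxx.
  case: (j == i); rewrite ?orbT // mulr0 addr0.
  by case: (j =P m) => [->|_]; rewrite ?mulr1 ?subrr ?eqxx // mulr0 subr0.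
rewrite cardsU1 (cardsD1 m [set j | x 0 j != 0]) -/(I1 x) xm.
by case: (i \notin _).
Qed.

Lemma support_near z p j : p 0 j != 0 -> `|z - p| < `|p 0 j| -> z 0 j != 0.
Proof.
move=> pj zp; apply: contraTneq (ler_norm_entry (z - p) 0 j) => zj.
by rewrite -ltNge !mxE zj sub0r normrN.
Qed.

Lemma l0_ge_near p : exists2 d : R, 0 < d & forall z, `|z - p| < d -> (l0 p <= l0 z)%N.
Proof.
pose d := \big[Num.min/1]_(j | p 0 j != 0) `|p 0 j|.
exists d => [|z zp].
  by elim/big_ind: d => //[a b a0 b0|j]; rewrite ?lt_min ?a0 ?b0 ?normr_gt0.
apply: subset_leq_card; apply/fintype.subsetP => j; rewrite !inE => pj.
apply: (support_near pj); apply: (lt_le_trans zp).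
exact: (@bigmin_le_cond _ _ _ 1 j (fun j => p 0 j != 0) (fun j => `|p 0 j|)).
Qed.

(* Removing the smallest entry of [x] moves it no further from [p] than twice
   [|x - p|]: some entry of [x] vanishes in [p] and bounds that smallest one. *)
Lemma swap_near x p m :
  (l0 p < l0 x)%N -> m \in I1 x -> (forall j, j \in I1 x -> `|x 0 m| <= `|x 0 j|) ->
  `|x - x 0 m *: ei R m - p| <= `|x - p| *+ 2.
Proof.
move=> l0px xm mmin.
have [j xj /eqP pj] : exists2 j, j \in I1 x & p 0 j == 0.
  have /fintype.subsetPn [j xj pj] : ~~ (I1 x \subset I1 p).
    by apply: contraTN l0px => /subset_leq_card; rewrite -!/(l0 _) -leqNgt.
  by exists j; rewrite // inE negbK in pj.
have xj_near : `|x 0 j| <= `|x - p|.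
  by have := ler_norm_entry (x - p) 0 j; rewrite !mxE pj subr0.
have xm_shift : `|x 0 m *: ei R m| <= `|x 0 m|.
  by rewrite normrZ -{2}(mulr1 `|x 0 m|) ler_wpM2l // norm_ei_le1.
have := mmin j xj; rewrite addrAC mulr2n.
by move: (ler_normB (x - p) (x 0 m *: ei R m)); lra.
Qed.

End Support.

Section Step.
Variables (R : realType) (n s : nat) (f : 'rV[R]_n -> R) (x y : 'rV[R]_n).
Hypothesis step : pss_step f s x y.

Lemma pss_step_le : f y <= f x.
Proof.
move: step; rewrite /pss_step; case: ifP => _.
  by case=> [[i [t [_ [_ [/ltW fy ->]]]]]|[_ ->]].
move=> [i1 [i2 [m [T1 [T2 [[xi1 _ T1min _ _] [_ _ _ yE]]]]]]].
have fT1 : f (x + T1 *: ei R i1) <= f x by have := T1min i1 0 xi1; rewrite scale0r addr0.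
by case: ifP yE => [_ -> // | fT2 ->]; apply: le_trans fT1; rewrite leNgt fT2.
Qed.

Lemma pss_step_le_any_coord : (l0 x < s)%N -> forall i t, f y <= f (x + t *: ei R i).
Proof.
by move=> l0xs; move: step; rewrite /pss_step l0xs; case=> [[i [t [_ [? [_ ->]]]]]|[? ->]].
Qed.

Lemma pss_step_le_support_coord i t : i \in I1 x -> f y <= f (x + t *: ei R i).
Proof.
move=> xi; have [l0xs|l0xs] := ltnP (l0 x) s; first exact: pss_step_le_any_coord.
move: step; rewrite /pss_step ltnNge l0xs /=.
move=> [i1 [i2 [m [T1 [T2 [[_ _ T1min _ _] [_ _ _ yE]]]]]]].
have fT1 := T1min i t xi.
by case: ifP yE => [_ -> // | fT2 ->]; apply: le_trans fT1; rewrite leNgt fT2.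
Qed.

Lemma pss_step_swap : ~~ (l0 x < s)%N -> exists i2 m : 'I_n,
  [/\ m \in I1 x, (forall j, j \in I1 x -> `|x 0 m| <= `|x 0 j|),
      (forall t, f y <= f (x - x 0 m *: ei R m + t *: ei R i2)) &
      (forall j, j \in I0 x -> `|gradi f x j| <= `|gradi f x i2|)].
Proof.
move=> l0xs; move: step; rewrite /pss_step (negbTE l0xs).
move=> [i1 [i2 [m [T1 [T2 [[_ _ _ _ i2max] [xm mmin T2min yE]]]]]]].
exists i2, m; split => // t; apply: le_trans (T2min t).
by case: ifP yE => [/ltW fT1|_] ->.
Qed.

Lemma pss_step_l0 : (l0 x <= s)%N -> (l0 y <= s)%N.
Proof.
move=> l0xs; move: step; rewrite /pss_step; case: ifP => l0xs'.
  by case=> [[i [t [_ [_ [_ ->]]]]]|[_ ->]] //; apply: leq_trans (l0_add_ei _ _ _) l0xs'.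
move=> [i1 [i2 [m [T1 [T2 [[xi1 _ _ _ _] [xm _ _ yE]]]]]]].
by case: ifP yE => _ ->; apply: leq_trans l0xs; [apply: l0_add_ei_support | apply: l0_swap].
Qed.

End Step.

Section Accumulation.
Variables (R : realType) (n s : nat) (f : 'rV[R]_n -> R) (xs : nat -> 'rV[R]_n) (p : 'rV[R]_n).
Hypotheses (df : forall x, differentiable f x)
  (gc : forall i, continuous (fun x => gradi f x i))
  (seq : pss_seq f s xs) (acc : accumulation_point xs p).

Lemma frequently_near_all (P : nat -> Prop) : (forall k, P k) -> frequently_near xs p P.
Proof. by move=> Pall e e0 N; have [k [kN xsk]] := @acc e e0 N; exists k. Qed.

Lemma pss_seq_le k j : (k <= j)%N -> f (xs j) <= f (xs k).
Proof.
elim: j => [|j IHj]; first by rewrite leqn0 => /eqP ->.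
rewrite leq_eqVlt => /predU1P [<- //|]; rewrite ltnS => /IHj.
exact/le_trans/(pss_step_le (seq.2 j)).
Qed.

Lemma pss_seq_l0 k : (l0 (xs k) <= s)%N.
Proof. by elim: k => [|k IHk]; [exact: seq.1 | exact: pss_step_l0 (seq.2 k) IHk]. Qed.

Lemma accumulation_le k : f p <= f (xs k).
Proof.
rewrite -lerN2; apply: (le_of_cvg_ge (g := fun z : 'rV[R]_n => - f z)).
  exact/continuousN/differentiable_continuous.
move=> e e0; have [j [kj xsj]] := @acc e e0 k.
by exists (xs j); split => //; rewrite lerN2; apply: pss_seq_le.
Qed.

Lemma accumulation_l0 : (l0 p <= s)%N.
Proof.
have [d d0 l0_near] := l0_ge_near p; have [k [_ xsk]] := @acc d d0 0.
exact: leq_trans (l0_near _ xsk) (pss_seq_l0 k).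
Qed.

Lemma gradi_eq0_near_line_min i :
  (forall e, 0 < e -> exists y, `|y - p| < e /\ forall t, f p <= f (y + t *: ei R i)) ->
  gradi f p i = 0.
Proof.
move=> near_min; apply: derive_eq0_at_line_min => // t.
apply: le_of_cvg_ge; first exact: differentiable_continuous.
move=> e e0; have [y [yp ymin]] := near_min e e0.
by exists (y + t *: ei R i); split; rewrite // opprD addrACA subrr addr0.
Qed.

Lemma gradi_support_eq0 i : i \in I1 p -> gradi f p i = 0.
Proof.
rewrite inE => pi; apply: gradi_eq0_near_line_min => e e0.
have d0 : 0 < Num.min e `|p 0 i| by rewrite lt_min e0 normr_gt0.
have [k [_ xsk]] := @acc _ d0 0; move: xsk; rewrite lt_min => /andP [xske xskp].
exists (xs k); split => // t; apply: le_trans (accumulation_le k.+1) _.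
by apply: (pss_step_le_support_coord (seq.2 k)); rewrite inE (support_near pi).
Qed.

Lemma gradi_eq0_often_below_sparsity i :
  frequently_near xs p (fun k => (l0 (xs k) < s)%N \/ i \in I1 (xs k)) ->
  gradi f p i = 0.
Proof.
move=> often; apply: gradi_eq0_near_line_min => e e0.
have [k [_ [l0xs_or_xi xsk]]] := often e e0 0.
exists (xs k); split => // t; apply: le_trans (accumulation_le k.+1) _.
case: l0xs_or_xi => [l0xs | xi].
  exact: pss_step_le_any_coord (seq.2 k) l0xs i t.
exact: (pss_step_le_support_coord (seq.2 k)) xi.
Qed.

Lemma gradi_eq0_often_swap i : (l0 p < s)%N ->
  frequently_near xs p (fun k => ~~ (l0 (xs k) < s)%N /\ i \in I0 (xs k)) ->
  gradi f p i = 0.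
Proof.
move=> l0ps often.
pose swap_dominates (i2 : 'I_n) k := ~~ (l0 (xs k) < s)%N /\ exists m : 'I_n,
  [/\ m \in I1 (xs k), (forall j, j \in I1 (xs k) -> `|xs k 0 m| <= `|xs k 0 j|),
      (forall t, f (xs k.+1) <= f (xs k - xs k 0 m *: ei R m + t *: ei R i2)) &
      `|gradi f (xs k) i| <= `|gradi f (xs k) i2|].
have [i2 often_i2] : exists i2, frequently_near xs p (swap_dominates i2).
  apply: frequently_near_exists; apply: frequently_near_mono often => k [l0xs xi].
  have [i2 [m [xm mmin fswap i2max]]] := pss_step_swap (seq.2 k) l0xs.
  by exists i2; split => //; exists m; split => //; apply: i2max.
have grad_i2 : gradi f p i2 = 0.
  apply: gradi_eq0_near_line_min => e e0.
  have e20 : 0 < e / 2 by rewrite divr_gt0.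
  have [k [_ [[l0xs [m [xm mmin fswap _]]] xsk]]] := often_i2 _ e20 0.
  exists (xs k - xs k 0 m *: ei R m); split; last first.
    by move=> t; apply: le_trans (accumulation_le k.+1) (fswap t).
  have l0pxs : (l0 p < l0 (xs k))%N by move: l0xs l0ps; rewrite -leqNgt; lia.
  by apply: le_lt_trans (swap_near l0pxs xm mmin) _; rewrite mulr2n; lra.
have : `|gradi f p i| <= `|gradi f p i2|.
  rewrite -subr_ge0; apply: (le_of_cvg_ge (g := fun z => `|gradi f z i2| - `|gradi f z i|)).
    by apply: continuousB; apply: continuous_comp (@norm_continuous _ _ _); apply: gc.
  move=> e e0; have [k [_ [[_ [m [_ _ _ i2max]]] xsk]]] := often_i2 e e0 0.
  by exists (xs k); split; rewrite ?subr_ge0.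
by rewrite grad_i2 normr0 normr_le0 => /eqP.
Qed.

Lemma gradi_eq0_below_sparsity i : (l0 p < s)%N -> gradi f p i = 0.
Proof.
move=> l0ps.
have cases k : ((l0 (xs k) < s)%N \/ i \in I1 (xs k)) \/
               (~~ (l0 (xs k) < s)%N /\ i \in I0 (xs k)).
  rewrite !inE; case: ltnP => l0xs; first by left; left.
  by case: eqP => xi; [right | left; right].
have [] := frequently_near_or (frequently_near_all cases).
  exact: gradi_eq0_often_below_sparsity.
exact: gradi_eq0_often_swap.
Qed.

End Accumulation.

Theorem lemma3p3 (R : realType) (n s : nat) (f : 'rV[R]_n -> R)
  (xs : nat -> 'rV[R]_n) (p : 'rV[R]_n) :
  C1 f -> bounded_below f -> (0 < s)%N -> (s < n)%N ->
  pss_seq f s xs -> accumulation_point xs p -> BF f s p.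
Proof.
move=> [df gc] _ _ _ seq acc; split; [|split].
- exact: accumulation_l0 seq acc.
- by move=> l0ps i; apply: (gradi_eq0_below_sparsity df gc seq acc).
- by move=> _ i; apply: (gradi_support_eq0 df seq acc).
Qed.
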